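(* Consider the multi-machine power system described in the context, and fix $\omega_0>0$ and $i_r^*\in\mathbb{R}^n_{>0}$, with zero-dynamics manifold $\Omega=\{x\in\mathcal{X}: i_r=i_r^*,\ \omega=\omega_0\mathbb{1}\}$. The unique control action $u=u^\star(x)=(u_m^\star(x),u_r^\star(x))$ which renders $\Omega$ invariant for the system is given by $$u_r^\star(x)=R_r i_r^*+(L_m\otimes \mathsf{e}_1^\top)\mathbf{R}_\theta^\top L_s^{-1}(-Z_s i_s+v),\qquad u_m^\star(x)=D\omega_0\mathbb{1}-I_r^*(L_m\otimes\mathsf{e}_2^\top)\mathbf{R}_\theta^\top i_s,$$ where $Z_s=R_s+\boldsymbol{j}\omega_0 L_s$ and $I_r^*=\mathrm{diag}(i_{r_i}^* )$.
   Context: Notation: $j=\begin{bsmallmatrix}0&-1\\1&0\end{bsmallmatrix}$, $I_2$ the $2\times2$ identity, $\mathsf{e}_1=(1,0)^\top$, $\mathsf{e}_2=(0,1)^\top$, $\mathbb{1}\in\mathbb{R}^n$ the all-ones vector, $\otimes$ the Kronecker product, $\boldsymbol{j}=I\otimes j$ (identity of the dimension dictated by context). For $\theta=(\theta_1,\dots,\theta_n)\in\mathbb{T}^n$, $R_{\theta_i}=\begin{bsmallmatrix}\cos\theta_i&-\sin\theta_i\\ \sin\theta_i&\cos\theta_i\end{bsmallmatrix}$ and $\mathbf{R}_\theta=\mathrm{blkdiag}(R_{\theta_1},\dots,R_{\theta_n})$. System: $n$ synchronous machines and $m$ transmission lines on a connected undirected graph with signed incidence matrix $E\in\mathbb{R}^{n\times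 m}$; $\mathbf{E}=E\otimes I_2$. Parameters (all scalar entries positive): $M=\mathrm{diag}(M_i)$, $D=\mathrm{diag}(D_i)$, $R_r=\mathrm{diag}(R_{r_i})$, $L_r=\mathrm{diag}(L_{r_i})$, $L_m=\mathrm{diag}(L_{m_i})$ in $\mathbb{R}^{n\times n}$; $R_s=\mathrm{diag}(R_{s_i})\otimes I_2$, $L_s=\mathrm{diag}(L_{s_i})\otimes I_2$, $C=\mathrm{diag}(C_i)\otimes I_2$, $G=\mathrm{diag}(G_i)\otimes I_2$ in $\mathbb{R}^{2n\times 2n}$; $L_{\mathsf t}=\mathrm{diag}(L_{\mathsf t_k})\otimes I_2$, $R_{\mathsf t}=\mathrm{diag}(R_{\mathsf t_k})\otimes I_2$ in $\mathbb{R}^{2m\times2m}$; and $L_{s_i}L_{r_i}-L_{m_i}^2>0$. State $x=(M\omega,\theta,\lambda_r,\lambda_s,Cv,L_{\mathsf t}i_{\mathsf t})\in\mathcal{X}=\mathbb{R}^n\times\mathbb{T}^n\times\mathbb{R}^n\times\mathbb{R}^{2n}\times\mathbb{R}^{2n}\times\mathbb{R}^{2m}$, input $u=(u_m,u_r)\in\mathbb{R}^n\times\mathbb{R}^n$. Stator currents $i_s\in\mathbb{R}^{2n}$ and rotor currents $i_r\in\mathbb{R}^n$ are defined from the fluxes by $\lambda_s=L_s i_s+\mathbf{R}_\theta(L_m\otimes\mathsf{e}_1)i_r$, $\lambda_r=L_r i_r+(L_m\otimes\mathsf{e}_1^\top)\mathbf{R}_\theta^\top i_s$; electrical torque $\tau_e=-I_r(L_m\otimes\mathsf{e}_2^\top)\mathbf{R}_\theta^\top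 i_s$ with $I_r=\mathrm{diag}(i_{r_i})$. Dynamics: $M\dot\omega=-D\omega-\tau_e+u_m$, $\dot\theta=\omega$, $\dot\lambda_r=-R_r i_r+u_r$, $\dot\lambda_s=-R_s i_s+v$, $C\dot v=-Gv-\mathbf{E}i_{\mathsf t}-i_s$, $L_{\mathsf t}\tfrac{d}{dt}i_{\mathsf t}=-R_{\mathsf t}i_{\mathsf t}+\mathbf{E}^\top v$. *)

From HB Require Import structures.
From mathcomp Require Import all_boot all_order all_algebra.
From mathcomp Require Import all_classical all_reals all_analysis.
Set Implicit Arguments.
Unset Strict Implicit.
Unset Printing Implicit Defensive.
Import Order.TTheory GRing.Theory Num.Theory.
Import numFieldNormedType.Exports.
Local Open Scope ring_scope.

Section PowerSystem.
Variable R : realType.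

Definition e1 : 'cV[R]_2 := \col_a (a == ord0)%:R.
Definition e2 : 'cV[R]_2 := \col_a (a == ord_max)%:R.

Definition jmx : 'M[R]_2 :=
  \matrix_(a, b) (if a == b then 0 else if a == ord0 then -1 else 1).

Definition rot (th : R) : 'M[R]_2 :=
  \matrix_(a, b) (if a == b then cos th else if a == ord0 then - sin th else sin th).

Definition sc (A : 'M[R]_1) : R := A ord0 ord0.

Definition signed_incidence (n m : nat) (E : 'M[R]_(n, m)) : Prop :=
  forall k : 'I_m, exists i j : 'I_n,
    [/\ i != j, E i k = 1, E j k = -1 & forall l, l != i -> l != j -> E l k = 0].

Definition adjacent (n m : nat) (E : 'M[R]_(n, m)) : rel 'I_n :=
  fun i j => (i != j) && [exists k, (E i k != 0) && (E j k != 0)].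

Definition connected_graph (n m : nat) (E : 'M[R]_(n, m)) : Prop :=
  forall i j : 'I_n, connect (adjacent E) i j.

(** Parameters of the n-machine, m-line system (block-diagonal parameters are
    given by their diagonal scalar entries). *)
Record params (n m : nat) := Params {
  pM : 'I_n -> R; pD : 'I_n -> R; pRr : 'I_n -> R; pLr : 'I_n -> R;
  pLm : 'I_n -> R; pRs : 'I_n -> R; pLs : 'I_n -> R; pC : 'I_n -> R;
  pG : 'I_n -> R; pLt : 'I_m -> R; pRt : 'I_m -> R; pE : 'M[R]_(n, m) }.

Definition admissible (n m : nat) (P : params n m) : Prop :=
  [/\ (forall i : 'I_n,
        [/\ 0 < pM P i, 0 < pD P i, 0 < pRr P i, 0 < pLr P i & 0 < pLm P i] /\
        [/\ 0 < pRs P i, 0 < pLs P i, 0 < pC P i & 0 < pG P i]),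
      (forall i : 'I_n, pLs P i * pLr P i - pLm P i ^+ 2 > 0),
      (forall k : 'I_m, 0 < pLt P k /\ 0 < pRt P k),
      signed_incidence (pE P) & connected_graph (pE P)].

(** Time signals: states (omega, theta, lambda_r, lambda_s, v, i_t), the
    stator/rotor currents determined by the fluxes, and the inputs.
    Two-dimensional quantities are stored per machine/line as 2-vectors
    (the Kronecker structure "_ (x) I_2"). Angles theta_i are real lifts. *)
Record traj (n m : nat) := Traj {
  om : 'I_n -> R -> R;
  th : 'I_n -> R -> R;
  lr : 'I_n -> R -> R;
  ls : 'I_n -> R -> 'cV[R]_2;
  vv : 'I_n -> R -> 'cV[R]_2;
  itl : 'I_m -> R -> 'cV[R]_2;
  isc : 'I_n -> R -> 'cV[R]_2;
  irc : 'I_n -> R -> R;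
  um : 'I_n -> R -> R;
  ur : 'I_n -> R -> R }.

Definition tau_e (n m : nat) (P : params n m) (X : traj n m) (i : 'I_n) (t : R) : R :=
  - (irc X i t * (pLm P i * sc (e2^T *m (rot (th X i t))^T *m isc X i t))).

Definition is_solution (n m : nat) (P : params n m) (X : traj n m) (a b : R) : Prop :=
  forall t, a < t < b ->
  (forall i, ls X i t = pLs P i *: isc X i t
               + (pLm P i * irc X i t) *: (rot (th X i t) *m e1)) /\
  (forall i, lr X i t = pLr P i * irc X i t
               + pLm P i * sc (e1^T *m (rot (th X i t))^T *m isc X i t)) /\
  (forall i, is_derive t 1 (fun s => pM P i * om X i s)
               (- (pD P i * om X i t) - tau_e P X i t + um X i t)) /\
  (forall i, is_derive t 1 (th X i) (om X i t)) /\
  (forall i, is_derive t 1 (lr X i) (- (pRr P i * irc X i t) + ur X i t)) /\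
  (forall i, is_derive t 1 (ls X i) (- (pRs P i *: isc X i t) + vv X i t)) /\
  (forall i, is_derive t 1 (fun s => pC P i *: vv X i s)
               (- (pG P i *: vv X i t) - \sum_(k < m) pE P i k *: itl X k t
                - isc X i t)) /\
  (forall k, is_derive t 1 (fun s => pLt P k *: itl X k s)
               (- (pRt P k *: itl X k t) + \sum_(i < n) pE P i k *: vv X i t)).

Definition in_Omega (n m : nat) (X : traj n m) (irs : 'I_n -> R) (w0 : R) (t : R) : Prop :=
  forall i, irc X i t = irs i /\ om X i t = w0.

(** u_r^*(x), i-th entry:
    R_r i_r^* + (L_m (x) e1^T) R_theta^T L_s^{-1} (- Z_s i_s + v),
    Z_s = R_s + j omega_0 L_s *)
Definition ur_star (n m : nat) (P : params n m) (irs : 'I_n -> R) (w0 : R)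
    (i : 'I_n) (theta : R) (is_ v : 'cV[R]_2) : R :=
  pRr P i * irs i
  + pLm P i * sc (e1^T *m (rot theta)^T *m
       ((pLs P i)^-1 *: (- (pRs P i *: is_ + (w0 * pLs P i) *: (jmx *m is_)) + v))).

Definition um_star (n m : nat) (P : params n m) (irs : 'I_n -> R) (w0 : R)
    (i : 'I_n) (theta : R) (is_ : 'cV[R]_2) : R :=
  pD P i * w0 - irs i * (pLm P i * sc (e2^T *m (rot theta)^T *m is_)).

End PowerSystem.

From Pilot Require Import Defs.
From HB Require Import structures.
From mathcomp Require Import all_boot all_order all_algebra.
From mathcomp Require Import all_classical all_reals all_analysis.
From mathcomp Require Import ring.
Import Order.TTheory GRing.Theory Num.Theory.
Import numFieldNormedType.Exports.
Local Open Scope ring_scope.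

(* Along a trajectory, the errors x = om_i - w0 and y = i_r,i - i_r,i^star of each
   machine obey
     M x' = L_m q y - D x + (u_m - u_m^star),
     sigma y' = - L_m q x - R_r y + (u_r - u_r^star),
   where q = e2^T R_theta^T i_s is the q-axis stator current in the rotor frame,
   sigma = L_r - L_m^2 / L_s is the transient rotor inductance, and the rotor current is
   read off the fluxes as (lambda_r - (L_m / L_s) e1^T R_theta^T lambda_s) / sigma.
   On Omega both left-hand sides vanish, which forces u = u^star.  Conversely, for
   u = u^star the coupling is skew-symmetric, so V = M x^2 + sigma y^2 satisfies
   - K V <= V' = - 2 D x^2 - 2 R_r y^2 <= 0, and such a nonnegative V vanishes on the
   whole interval as soon as it vanishes at one time. *)

Section RotorFrame.
Context {R : realType}.
Implicit Types (th a b : R) (w : 'cV[R]_2).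
Local Notation i0 := (ord0 : 'I_2).
Local Notation i1 := (ord_max : 'I_2).

Let lift0_ord0 : lift ord0 ord0 = i1.
Proof. exact/val_inj. Qed.

Lemma sc_e1_rotT th w :
  sc ((e1 R)^T *m (Defs.rot th)^T *m w) = cos th * w i0 0 + sin th * w i1 0.
Proof.
rewrite /sc !mxE !big_ord_recl !big_ord0 !mxE /= !big_ord_recl !big_ord0 !mxE /=.
by rewrite ?lift0_ord0; ring.
Qed.

Lemma sc_e2_rotT th w :
  sc ((e2 R)^T *m (Defs.rot th)^T *m w) = - sin th * w i0 0 + cos th * w i1 0.
Proof.
rewrite /sc !mxE !big_ord_recl !big_ord0 !mxE /= !big_ord_recl !big_ord0 !mxE /=.
by rewrite ?lift0_ord0; ring.
Qed.

Lemma rot_e1_0 th : (Defs.rot th *m e1 R) i0 0 = cos th.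
Proof. by rewrite !mxE !big_ord_recl big_ord0 !mxE /= ?lift0_ord0; ring. Qed.

Lemma rot_e1_1 th : (Defs.rot th *m e1 R) i1 0 = sin th.
Proof. by rewrite !mxE !big_ord_recl big_ord0 !mxE /= ?lift0_ord0; ring. Qed.

Lemma jmx_mul0 w : (jmx R *m w) i0 0 = - w i1 0.
Proof. by rewrite !mxE !big_ord_recl big_ord0 !mxE /= ?lift0_ord0; ring. Qed.

Lemma jmx_mul1 w : (jmx R *m w) i1 0 = w i0 0.
Proof. by rewrite !mxE !big_ord_recl big_ord0 !mxE /= ?lift0_ord0; ring. Qed.

Lemma sc_e1_rotT_flux th a b w :
  sc ((e1 R)^T *m (Defs.rot th)^T *m (a *: w + b *: (Defs.rot th *m e1 R)))
  = a * sc ((e1 R)^T *m (Defs.rot th)^T *m w) + b.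
Proof.
rewrite !sc_e1_rotT ?(rot_e1_0, rot_e1_1, mxE).
by rewrite -[b in RHS]mulr1 -(cos2Dsin2 th); ring.
Qed.

Lemma sc_e2_rotT_flux th a b w :
  sc ((e2 R)^T *m (Defs.rot th)^T *m (a *: w + b *: (Defs.rot th *m e1 R)))
  = a * sc ((e2 R)^T *m (Defs.rot th)^T *m w).
Proof. by rewrite !sc_e2_rotT ?(rot_e1_0, rot_e1_1, mxE); ring. Qed.

End RotorFrame.

Section Calculus.
Context {R : realType}.
Implicit Types (a b t : R) (f : R -> R).

Lemma is_derive_mx_entry {p q : nat} (i : 'I_p) (j : 'I_q)
    {f : R -> 'M[R]_(p, q)} {t : R} {df : 'M[R]_(p, q)} :
  is_derive t 1 f df -> is_derive t 1 (fun s => f s i j) (df i j).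
Proof.
move=> [f_der <-]; have fij_der : derivable (fun s => f s i j) t 1.
  by move/derivable_mxP: f_der.
by apply: DeriveDef => //; rewrite derive_mx // mxE.
Qed.

Lemma is_derive_sc_e1_rotT {th : R -> R} {l : R -> 'cV[R]_2} {t dth dl} :
  is_derive t 1 th dth -> is_derive t 1 l dl ->
  is_derive t 1 (fun s => sc ((e1 R)^T *m (Defs.rot (th s))^T *m l s))
    (dth * sc ((e2 R)^T *m (Defs.rot (th t))^T *m l t)
     + sc ((e1 R)^T *m (Defs.rot (th t))^T *m dl)).
Proof.
move=> th_der l_der.
have l0_der := is_derive_mx_entry ord0 0 l_der.
have l1_der := is_derive_mx_entry ord_max 0 l_der.
have cos_der : is_derive t 1 (cos \o th) (- sin (th t) * dth) by exact: is_derive1_comp.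
have sin_der : is_derive t 1 (sin \o th) (cos (th t) * dth) by exact: is_derive1_comp.
under eq_fun do rewrite sc_e1_rotT.
have := is_deriveD (is_deriveM cos_der l0_der) (is_deriveM sin_der l1_der).
by move=> D; apply: is_derive_eq D _; rewrite sc_e2_rotT sc_e1_rotT /GRing.scale /=; ring.
Qed.

Lemma is_derive_eq0_of_const {f a b} {c t df : R} :
  (forall s, a < s < b -> f s = c) -> a < t < b -> is_derive t 1 f df -> df = 0.
Proof.
move=> f_const tab f_der.
have f_near : \forall s \near t, f s = cst c s.
  have := @near_in_itvoo R a b t; rewrite in_itv /= tab => /(_ isT).
  by apply: filterS => s; rewrite in_itv /=; exact: f_const.
by have [_ <-] := near_eq_is_derive f_near f_der; rewrite derive_val.
Qed.

Lemma is_derive_ge0_le f (df : R -> R) a b x y :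
  (forall s, a < s < b -> is_derive s 1 f (df s)) ->
  (forall s, a < s < b -> 0 <= df s) ->
  a < x -> x <= y -> y < b -> f x <= f y.
Proof.
move=> f_der df_ge0 ax xy yb.
apply: (@ger0_derive1_le_oo R f a b) => //.
- by move=> s; rewrite in_itv /= => /f_der[].
- move=> s; rewrite in_itv /= => sab.
  by rewrite derive1E; have [_ ->] := f_der s sab; exact: df_ge0.
- move=> s; rewrite inE /= in_itv /= => /f_der[f_der_s _].
  exact/differentiable_continuous/derivable1_diffP.
- by rewrite in_itv /= ax (le_lt_trans xy yb).
- by rewrite in_itv /= yb (lt_le_trans ax xy).
Qed.

Lemma nonneg_decay_eq0 (V dV : R -> R) (K a b t0 : R) :
  (forall s, a < s < b -> is_derive s 1 V (dV s)) ->
  (forall s, a < s < b -> 0 <= V s) ->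
  (forall s, a < s < b -> - (K * V s) <= dV s <= 0) ->
  a < t0 < b -> V t0 = 0 -> forall t, a < t < b -> V t = 0.
Proof.
move=> V_der V_ge0 dV_bounds /andP[at0 t0b] Vt0 t /[dup] tab /andP[a_t tb].
apply/eqP; rewrite eq_le V_ge0 // andbT.
have [t0t | tt0] := leP t0 t.
  rewrite -Vt0 -lerN2.
  apply: (@is_derive_ge0_le (fun s => - V s) (fun s => - dV s) a b) => //.
    by move=> s sab; exact: is_deriveN (V_der s sab).
  by move=> s sab; have /andP[_] := dV_bounds s sab; rewrite oppr_ge0.
(* Backwards in time, V' >= - K V makes [exp (K s) * V s] nondecreasing. *)
pose W s := expR (K * s) * V s.
have W_der s : a < s < b -> is_derive s 1 W (expR (K * s) * (K * V s + dV s)).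
  move=> sab.
  have K_der : is_derive s 1 (fun r => K * r) K.
    by apply: is_derive_eq (is_deriveZ K (is_derive_id s 1)) _; rewrite /GRing.scale /= mulr1.
  have := is_deriveM (is_derive1_comp (is_derive_expR (K * s)) K_der) (V_der s sab).
  by move=> WD; apply: is_derive_eq WD _; rewrite /GRing.scale /=; ring.
have : W t <= W t0.
  apply: (@is_derive_ge0_le W _ a b t t0 W_der) a_t (ltW tt0) t0b.
  move=> s sab; rewrite mulr_ge0 ?expR_ge0 // -lerBlDr sub0r.
  by case/andP: (dV_bounds s sab); rewrite lerNl.
by rewrite /W /= Vt0 mulr0 pmulr_rle0 // expR_gt0.
Qed.

Lemma skew_dissipative_eq0 (x y c : R -> R) (Mx My Dx Dy a b t0 : R) :
  0 < Mx -> 0 < My -> 0 <= Dx -> 0 <= Dy ->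
  (forall s, a < s < b ->
     is_derive s 1 (fun r => Mx * x r) (c s * y s - Dx * x s)) ->
  (forall s, a < s < b ->
     is_derive s 1 (fun r => My * y r) (- (c s * x s) - Dy * y s)) ->
  a < t0 < b -> x t0 = 0 -> y t0 = 0 ->
  forall t, a < t < b -> x t = 0 /\ y t = 0.
Proof.
move=> Mx_gt0 My_gt0 Dx_ge0 Dy_ge0 x_der y_der t0ab xt0 yt0 t tab.
have [Mx_ge0 My_ge0] := (ltW Mx_gt0, ltW My_gt0).
have unscale (M : R) (z : R -> R) : 0 < M -> z = M^-1 \*: (fun r => M * z r).
  by move=> M_gt0; apply/funext => r; rewrite /= [RHS]mulrA mulVf ?mul1r ?gt_eqF.
pose V s := Mx * x s ^+ 2 + My * y s ^+ 2.
have V_der s : a < s < b ->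
    is_derive s 1 V (- (2 * Dx * x s ^+ 2) - 2 * Dy * y s ^+ 2).
  move=> sab.
  have dx := is_deriveZ Mx^-1 (x_der s sab); rewrite -unscale // in dx.
  have dy := is_deriveZ My^-1 (y_der s sab); rewrite -unscale // in dy.
  have := is_deriveD (is_deriveZ Mx (is_deriveM dx dx)) (is_deriveZ My (is_deriveM dy dy)).
  by move=> VD; apply: is_derive_eq VD _; rewrite /GRing.scale /=; field; rewrite !gt_eqF.
have V0 : V t = 0.
  apply: (@nonneg_decay_eq0 V _ (2 * Dx / Mx + 2 * Dy / My) a b t0) V_der _ _ t0ab _ t tab.
  - by move=> s _; apply: addr_ge0; rewrite mulr_ge0 ?sqr_ge0.
  - move=> s _; rewrite -opprD lerN2 oppr_le0; apply/andP; split; last first.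
      by rewrite addr_ge0 // mulr_ge0 ?sqr_ge0 // mulr_ge0.
    rewrite /V -subr_ge0.
    have -> : (2 * Dx / Mx + 2 * Dy / My) * (Mx * x s ^+ 2 + My * y s ^+ 2)
                - (2 * Dx * x s ^+ 2 + 2 * Dy * y s ^+ 2)
              = 2 * Dx * My / Mx * y s ^+ 2 + 2 * Dy * Mx / My * x s ^+ 2.
      by field; rewrite !gt_eqF.
    by apply: addr_ge0; rewrite mulr_ge0 ?sqr_ge0 ?divr_ge0 ?mulr_ge0.
  - by rewrite /V xt0 yt0 expr0n mulr0 add0r mulr0.
move/eqP: V0; rewrite /V paddr_eq0 ?(mulr_ge0 Mx_ge0 (sqr_ge0 _))
  ?(mulr_ge0 My_ge0 (sqr_ge0 _)) //.
by rewrite !mulf_eq0 (gt_eqF Mx_gt0) (gt_eqF My_gt0) /= !orbb => /andP[/eqP -> /eqP ->].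
Qed.

End Calculus.

Section Machine.
Context {R : realType} {n m : nat} {P : params R n m} {X : traj R n m} {i : 'I_n}.
Context {w0 : R} {irs : 'I_n -> R}.
Hypotheses (M_gt0 : 0 < pM P i) (D_ge0 : 0 <= pD P i) (Rr_ge0 : 0 <= pRr P i).
Hypotheses (Ls_gt0 : 0 < pLs P i) (LsLr_gt0 : 0 < pLs P i * pLr P i - pLm P i ^+ 2).

Definition transient_Lr : R := pLr P i - pLm P i ^+ 2 / pLs P i.

Definition rotor_current_of_fluxes (s : R) : R :=
  (lr X i s - pLm P i / pLs P i * sc ((e1 R)^T *m (Defs.rot (th X i s))^T *m ls X i s))
  / transient_Lr.

Definition stator_q_current (s : R) : R :=
  sc ((e2 R)^T *m (Defs.rot (th X i s))^T *m isc X i s).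

Lemma transient_Lr_gt0 : 0 < transient_Lr.
Proof.
have -> : transient_Lr = (pLs P i * pLr P i - pLm P i ^+ 2) / pLs P i.
  by rewrite /transient_Lr; field; rewrite gt_eqF.
exact: divr_gt0.
Qed.

Lemma rotor_current_of_fluxesE {a b s} : is_solution P X a b -> a < s < b ->
  rotor_current_of_fluxes s = irc X i s.
Proof.
move=> sol sab; have [ls_def [lr_def _]] := sol s sab.
rewrite /rotor_current_of_fluxes ls_def lr_def sc_e1_rotT_flux.
by rewrite /transient_Lr; field; rewrite gt_eqF //= mulrC gt_eqF.
Qed.

Lemma speed_error_is_derive {a b t} : is_solution P X a b -> a < t < b ->
  is_derive t 1 (fun s => pM P i * (om X i s - w0))
    (pLm P i * stator_q_current t * (irc X i t - irs i) - pD P i * (om X i t - w0)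
     + (um X i t - um_star P irs w0 i (th X i t) (isc X i t))).
Proof.
move=> sol tab; have [_ [_ [Mom_der _]]] := sol t tab.
have -> : (fun s => pM P i * (om X i s - w0))
          = (fun s => pM P i * om X i s) - cst (pM P i * w0).
  by apply/funext => s; rewrite !fctE /=; ring.
apply: is_derive_eq (is_deriveB (Mom_der i) (is_derive_cst _ _ _)) _.
by rewrite /tau_e /um_star /stator_q_current; ring.
Qed.

Lemma rotor_current_error_is_derive {a b t} : is_solution P X a b -> a < t < b ->
  is_derive t 1 (fun s => transient_Lr * (rotor_current_of_fluxes s - irs i))
    (- (pLm P i * stator_q_current t * (om X i t - w0)) - pRr P i * (irc X i t - irs i)
     + (ur X i t - ur_star P irs w0 i (th X i t) (isc X i t) (vv X i t))).
Proof.
move=> sol tab; have [ls_def [_ [_ [th_der [lr_der [ls_der _]]]]]] := sol t tab.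
pose d s := sc ((e1 R)^T *m (Defs.rot (th X i s))^T *m ls X i s).
have -> : (fun s => transient_Lr * (rotor_current_of_fluxes s - irs i))
          = lr X i - (pLm P i / pLs P i) \*: d - cst (transient_Lr * irs i).
  apply/funext => s; rewrite /rotor_current_of_fluxes !fctE /= /d -[_ *: _]/(_ * _).
  by field; rewrite !gt_eqF ?transient_Lr_gt0.
have d_der := is_derive_sc_e1_rotT (th_der i) (ls_der i).
have := is_deriveB (is_deriveB (lr_der i) (is_deriveZ (pLm P i / pLs P i) d_der))
                   (is_derive_cst (transient_Lr * irs i) t 1).
move=> D; apply: is_derive_eq D _.
rewrite ls_def sc_e2_rotT_flux /ur_star /stator_q_current /GRing.scale /=.
rewrite !sc_e1_rotT !sc_e2_rotT ?(jmx_mul0, jmx_mul1, mxE).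
by field; rewrite gt_eqF.
Qed.

Lemma inputs_eq_star_of_Omega {a b} : is_solution P X a b ->
  (forall s, a < s < b -> irc X i s = irs i /\ om X i s = w0) ->
  forall t, a < t < b ->
  um X i t = um_star P irs w0 i (th X i t) (isc X i t) /\
  ur X i t = ur_star P irs w0 i (th X i t) (isc X i t) (vv X i t).
Proof.
move=> sol in_Omega t tab; have [ir_t om_t] := in_Omega t tab.
have speed_err s : a < s < b -> pM P i * (om X i s - w0) = 0.
  by move=> sab; have [_ ->] := in_Omega s sab; rewrite subrr mulr0.
have current_err s : a < s < b ->
    transient_Lr * (rotor_current_of_fluxes s - irs i) = 0.
  move=> sab; rewrite (rotor_current_of_fluxesE sol sab).
  by have [-> _] := in_Omega s sab; rewrite subrr mulr0.
have /eqP := is_derive_eq0_of_const speed_err tab (speed_error_is_derive sol tab).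
have /eqP := is_derive_eq0_of_const current_err tab (rotor_current_error_is_derive sol tab).
rewrite ir_t om_t !subrr !mulr0 oppr0 !addr0 !add0r !subr_eq0.
by move=> /eqP ur_eq /eqP um_eq.
Qed.

Lemma Omega_invariant_of_inputs_star {a b t0} : is_solution P X a b ->
  (forall s, a < s < b ->
     um X i s = um_star P irs w0 i (th X i s) (isc X i s) /\
     ur X i s = ur_star P irs w0 i (th X i s) (isc X i s) (vv X i s)) ->
  a < t0 < b -> irc X i t0 = irs i /\ om X i t0 = w0 ->
  forall t, a < t < b -> irc X i t = irs i /\ om X i t = w0.
Proof.
move=> sol u_star t0ab [ir_t0 om_t0] t tab.
have [om_err ir_err] : om X i t - w0 = 0 /\ rotor_current_of_fluxes t - irs i = 0.
  apply: (@skew_dissipative_eq0 _ (fun s => om X i s - w0)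
    (fun s => rotor_current_of_fluxes s - irs i) (fun s => pLm P i * stator_q_current s)
    _ _ _ _ a b t0 M_gt0 transient_Lr_gt0 D_ge0 Rr_ge0 _ _ t0ab) tab => [s sab|s sab||].
  - apply: is_derive_eq (speed_error_is_derive sol sab) _.
    by have [-> _] := u_star s sab; rewrite (rotor_current_of_fluxesE sol sab) subrr addr0.
  - apply: is_derive_eq (rotor_current_error_is_derive sol sab) _.
    by have [_ ->] := u_star s sab; rewrite (rotor_current_of_fluxesE sol sab) subrr addr0.
  - by rewrite om_t0 subrr.
  - by rewrite (rotor_current_of_fluxesE sol t0ab) ir_t0 subrr.
rewrite (rotor_current_of_fluxesE sol tab) in ir_err.
by split; apply/eqP; rewrite -subr_eq0; apply/eqP.
Qed.

End Machine.

Theorem lemma1 (R : realType) (n m : nat) (P : params R n m) (w0 : R)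
    (irs : 'I_n -> R) :
  admissible P -> 0 < w0 -> (forall i, 0 < irs i) ->
  (* uniqueness: any input keeping a trajectory in Omega is u^*(x) *)
  (forall (X : traj R n m) (a b : R),
      is_solution P X a b ->
      (forall t, a < t < b -> in_Omega X irs w0 t) ->
      forall t, a < t < b -> forall i,
        um X i t = um_star P irs w0 i (th X i t) (isc X i t) /\
        ur X i t = ur_star P irs w0 i (th X i t) (isc X i t) (vv X i t)) /\
  (* invariance: under u = u^*(x), trajectories meeting Omega stay in Omega *)
  (forall (X : traj R n m) (a b : R),
      is_solution P X a b ->
      (forall t, a < t < b -> forall i,
        um X i t = um_star P irs w0 i (th X i t) (isc X i t) /\
        ur X i t = ur_star P irs w0 i (th X i t) (isc X i t) (vv X i t)) ->
      forall t0, a < t0 < b -> in_Omega X irs w0 t0 ->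
      forall t, a < t < b -> in_Omega X irs w0 t).
Proof.
move=> [machine_pos LsLr_pos _ _ _] _ _.
split=> [X a b sol in_Omega t tab i | X a b sol u_star t0 t0ab in_Omega0 t tab i].
- have [_ [_ Ls_gt0 _ _]] := machine_pos i.
  by apply: (inputs_eq_star_of_Omega Ls_gt0 (LsLr_pos i) sol _ t tab) => s /in_Omega.
- have [[M_gt0 D_gt0 Rr_gt0 _ _] [_ Ls_gt0 _ _]] := machine_pos i.
  by apply: (Omega_invariant_of_inputs_star M_gt0 (ltW D_gt0) (ltW Rr_gt0) Ls_gt0
               (LsLr_pos i) sol _ t0ab (in_Omega0 i) t tab) => s /u_star.
Qed.
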